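(* Let $G$ be the central product of normal subgroups $H,K$ ($G=HK$, $[H,K]=1$), $Z=H'\cap K'$, and $D$ a divisible abelian group with trivial action. Let $\theta':\operatorname{H}^2(G,D)\to \operatorname{H}^2(H,D)\oplus\operatorname{H}^2(K,D)\oplus\operatorname{Hom}(H\otimes K,D)$ be the homomorphism $\theta'=(\operatorname{res}^G_H,\operatorname{res}^G_K,\nu)$ defined in the context. Then there is an injective homomorphism $\chi:\operatorname{Hom}(Z,D)\to\operatorname{H}^2(G,D)$ such that the sequence $$0\to\operatorname{Hom}(Z,D)\xrightarrow{\chi}\operatorname{H}^2(G,D)\xrightarrow{\theta'}\operatorname{H}^2(H,D)\oplus\operatorname{H}^2(K,D)\oplus\operatorname{Hom}(H\otimes K,D)$$ is exact; in particular $\operatorname{Ker}(\theta')\cong\operatorname{Hom}(Z,D)$.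
   Context: $X\otimes Y$ denotes the abelian tensor product $X/X'\otimes_{\mathbb{Z}}Y/Y'$. For $\xi\in\operatorname{H}^2(G,D)$ represented by a 2-cocycle $f$ (values in $D$, written additively), $\nu(\xi)\in\operatorname{Hom}(H\otimes K,D)$ is given by $\nu(\xi)(hH'\otimes kK')=f(h,k)-f(k,h)$ for $h\in H$, $k\in K$. *)

(* D is a zmodType; the (possibly infinite) group G is an
   abstract group given by its carrier and operations (MathComp fingroups are
   finite only). *)
From HB Require Import structures.
From mathcomp Require Import all_boot all_algebra.
Set Implicit Arguments. Unset Strict Implicit. Unset Printing Implicit Defensive.
Import GRing.Theory.
Local Open Scope ring_scope.

Record grp := Grp {
  carrier :> Type;
  gmul : carrier -> carrier -> carrier;
  gone : carrier;
  ginv : carrier -> carrier;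
  gmulA : forall x y z, gmul x (gmul y z) = gmul (gmul x y) z;
  gmul1 : forall x, gmul gone x = x;
  gmulV : forall x, gmul (ginv x) x = gone }.

Section Defs.
Variable G : grp.
Notation "x * y" := (gmul x y) : grp_scope.
Local Open Scope grp_scope.

Definition is_subgroup (S : G -> Prop) : Prop :=
  S (gone G) /\ (forall x y, S x -> S y -> S (x * y)) /\
  (forall x, S x -> S (ginv x)).

Definition is_normal (S : G -> Prop) : Prop :=
  is_subgroup S /\ forall g x, S x -> S (ginv g * x * g).

Definition commg (x y : G) : G := ginv x * ginv y * x * y.

Inductive derived (S : G -> Prop) : G -> Prop :=
  | derived_one : derived S (gone G)
  | derived_comm x y : S x -> S y -> derived S (commg x y)
  | derived_mul x y : derived S x -> derived S y -> derived S (x * y)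
  | derived_inv x : derived S x -> derived S (ginv x).

Definition central_product (H K : G -> Prop) : Prop :=
  is_normal H /\ is_normal K /\
  (forall g, exists h k, H h /\ K k /\ g = h * k) /\
  (forall h k, H h -> K k -> h * k = k * h).

Variable D : zmodType.

Definition divisible : Prop :=
  forall (n : nat) (d : D), (0 < n)%N -> exists e : D, e *+ n = d.

Definition cocycle2 (f : G -> G -> D) : Prop :=
  forall x y z, f y z - f (x * y) z + f x (y * z) - f x y = 0.

(* f restricted to S x S is a 2-coboundary of S; for a 2-cocycle f of G this
   says res^G_S [f] = 0 in H^2(S,D). *)
Definition coboundary2_on (S : G -> Prop) (f : G -> G -> D) : Prop :=
  exists c : G -> D, forall x y, S x -> S y -> f x y = c y - c (x * y) + c x.

Definition coboundary2 (f : G -> G -> D) : Prop :=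
  coboundary2_on (fun _ => True) f.

Definition cohomologous (f g : G -> G -> D) : Prop :=
  coboundary2 (fun x y => f x y - g x y).

(* a : G -> D represents an element of Hom(Z,D) (only its values on Z matter). *)
Definition hom_on (Z : G -> Prop) (a : G -> D) : Prop :=
  forall x y, Z x -> Z y -> a (x * y) = a x + a y.

(* nu(f)(hH' (x) kK') = f(h,k) - f(k,h). *)
Definition nu (f : G -> G -> D) (h k : G) : D := f h k - f k h.

(* [f] lies in the kernel of theta' = (res^G_H, res^G_K, nu). Since H (x) K is
   generated by the elements hH' (x) kK', nu([f]) = 0 iff it vanishes on them. *)
Definition in_ker_theta' (H K : G -> Prop) (f : G -> G -> D) : Prop :=
  coboundary2_on H f /\ coboundary2_on K f /\
  (forall h k, H h -> K k -> nu f h k = 0).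

End Defs.

(* A := H :&: K is central in G = HK. Writing g = hpart g * kpart g with
   hpart g in H and kpart g in K, the defect
   w(x,y) = hpart(xy)^-1 hpart(x) hpart(y) lies in A and is a 2-cocycle, so each
   d in Hom(A,D) gives the 2-cocycle d o w of G. On H it is the coboundary of
   -d o kpart, on K that of d o hpart, and it is symmetric on H x K, so its
   class lies in Ker theta'. It is a coboundary exactly when d is a sum of
   restrictions of homomorphisms H -> D and K -> D, i.e. (D being divisible,
   so that homomorphisms extend) when d vanishes on Z = H' :&: K'. Hence
   chi(a) := [d o w], for any extension d of a in Hom(Z,D) to A, is a well
   defined injective homomorphism into Ker theta'. Conversely, for [f] in
   Ker theta' the trivialisations of f on H and on K give commuting
   homomorphic sections over H and K of the central extension of G by D with
   factor set f; their product is a section over G whose failure to be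
   multiplicative is a homomorphism of A evaluated at w, so [f] = chi(a). *)

From HB Require Import structures.
From mathcomp Require Import all_boot all_algebra boolp.
From mathcomp Require classical_sets.
From Stdlib Require Import ClassicalEpsilon.
(* Imported after MathComp so that [commg] is the commutator of [Defs]. *)
From Pilot Require Import Defs.
Set Implicit Arguments. Unset Strict Implicit. Unset Printing Implicit Defensive.
Import GRing.Theory.

Declare Scope grp_scope.
Local Notation "x * y" := (gmul x y) : grp_scope.
Local Notation "x ^-1" := (ginv x) : grp_scope.
Local Notation "1" := (gone _) : grp_scope.
Local Open Scope ring_scope.
Local Open Scope grp_scope.

(** * Groups, subgroups and integer powers *)

Section GroupTheory.
Variable G : grp.
Implicit Types (x y z : G) (S T : G -> Prop).

Lemma mulgV x : x * x^-1 = 1.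
Proof.
transitivity (x^-1^-1 * ((x^-1 * x) * x^-1)); first by rewrite !gmulA gmulV gmul1.
by rewrite gmulV gmul1 gmulV.
Qed.

Lemma mulg1 x : x * 1 = x.
Proof. by rewrite -(gmulV x) gmulA mulgV gmul1. Qed.

Lemma mulKg x y : x^-1 * (x * y) = y. Proof. by rewrite gmulA gmulV gmul1. Qed.
Lemma mulKVg x y : x * (x^-1 * y) = y. Proof. by rewrite gmulA mulgV gmul1. Qed.
Lemma mulgK x y : x * y * y^-1 = x. Proof. by rewrite -gmulA mulgV mulg1. Qed.
Lemma mulgVK x y : x * y^-1 * y = x. Proof. by rewrite -gmulA gmulV mulg1. Qed.

Lemma mulgI x y z : x * y = x * z -> y = z.
Proof. by move=> e; rewrite -(mulKg x y) e mulKg. Qed.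

Lemma mulg1_eq x y : x * y = 1 -> x^-1 = y.
Proof. by move=> e; rewrite -(mulKg x y) e mulg1. Qed.

Lemma invgK x : x^-1^-1 = x.
Proof. by apply: mulg1_eq; rewrite gmulV. Qed.

Lemma invMg x y : (x * y)^-1 = y^-1 * x^-1.
Proof. by apply: mulg1_eq; rewrite gmulA mulgK mulgV. Qed.

Lemma mulgACA x y z t : y * z = z * y -> x * y * (z * t) = x * z * (y * t).
Proof. by move=> yz; rewrite !gmulA -(gmulA x) yz gmulA. Qed.

Section Subgroup.
Variable S : G -> Prop.
Hypothesis hS : is_subgroup S.

Lemma subgroup1 : S 1. Proof. by case: hS. Qed.
Lemma subgroupM x y : S x -> S y -> S (x * y). Proof. by case: hS => _ [+ _]; apply. Qed.
Lemma subgroupV x : S x -> S x^-1. Proof. by case: hS => _ [_]; apply. Qed.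

Lemma derived_sub x : derived S x -> S x.
Proof.
elim=> [|a b Sa Sb|a b _ Sa _ Sb|a _ Sa]; rewrite /commg.
- exact: subgroup1.
- by do !apply: subgroupM => //; exact: subgroupV.
- exact: subgroupM.
- exact: subgroupV.
Qed.

End Subgroup.

Lemma derived_subgroup S : is_subgroup (derived S).
Proof. by split; [exact: derived_one | split; [exact: derived_mul | exact: derived_inv]]. Qed.

Lemma subgroupI S T : is_subgroup S -> is_subgroup T ->
  is_subgroup (fun x => S x /\ T x).
Proof.
move=> hS hT; split; first by split; apply: subgroup1.
split=> [x y [Sx Tx] [Sy Ty]|x [Sx Tx]]; split.
- exact: subgroupM.
- exact: subgroupM.
- exact: subgroupV.
- exact: subgroupV.
Qed.

Definition zpow x (j : int) : G :=
  match j with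
  | Posz n => iter n (fun y => y * x) 1
  | Negz n => iter n.+1 (fun y => y * x^-1) 1
  end.

Lemma zpow0 x : zpow x 0 = 1. Proof. by []. Qed.
Lemma zpow1 x : zpow x 1 = x. Proof. exact: gmul1. Qed.

Lemma zpowS x j : zpow x (j + 1) = zpow x j * x.
Proof.
case: j => [n|[|n]]; first by rewrite -PoszD addn1.
  by rewrite /= gmul1 gmulV.
have -> : (Negz n.+1 + 1 = Negz n)%R by rewrite !NegzE -(addn1 n.+1) PoszD opprD subrK.
by rewrite /= mulgVK.
Qed.

Lemma zpowSN x j : zpow x (j - 1) = zpow x j * x^-1.
Proof. by rewrite -{2}(subrK 1%R j) zpowS mulgK. Qed.

Lemma zpowD x i j : zpow x (i + j) = zpow x i * zpow x j.
Proof.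
elim/int_rec: j => [|n IH|n IH]; first by rewrite addr0 mulg1.
  by rewrite -addn1 PoszD addrA !zpowS IH gmulA.
by rewrite -addn1 PoszD opprD addrA !zpowSN IH gmulA.
Qed.

Lemma zpowN x j : zpow x (- j) = (zpow x j)^-1.
Proof. by apply/esym/mulg1_eq; rewrite -zpowD subrr. Qed.

Lemma zpowM x i j : zpow x (i * j) = zpow (zpow x j) i.
Proof.
elim/int_rec: i => [|n IH|n IH]; first by rewrite mul0r.
  by rewrite -addn1 PoszD mulrDl mul1r zpowS zpowD IH.
by rewrite -addn1 PoszD opprD mulrDl mulN1r zpowSN zpowD IH !zpowN.
Qed.

Lemma subgroup_zpow S x j : is_subgroup S -> S x -> S (zpow x j).
Proof.
move=> hS Sx; elim/int_rec: j => [|n IH|n IH]; first exact: subgroup1.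
  by rewrite -addn1 PoszD zpowS; apply: (subgroupM hS).
by rewrite -addn1 PoszD opprD zpowSN; exact: (subgroupM hS IH (subgroupV hS Sx)).
Qed.

End GroupTheory.

(** * Homomorphisms on subgroups and 2-cochains *)

Section HomOn.
Variables (G : grp) (D : zmodType) (S : G -> Prop) (c : G -> D).
Hypotheses (hS : is_subgroup S) (hc : hom_on S c).
Implicit Types x y z : G.

Lemma hom_on1 : c 1 = 0.
Proof.
have := hc (subgroup1 hS) (subgroup1 hS); rewrite gmul1 => /eqP.
by rewrite eq_sym -subr_eq0 addrK => /eqP.
Qed.

Lemma hom_onV x : S x -> c x^-1 = - c x.
Proof.
move=> Sx; apply/eqP; rewrite -addr_eq0.
by rewrite -hc ?gmulV ?hom_on1 //; exact: subgroupV.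
Qed.

Lemma hom_onVM x y z : S x -> S y -> S z -> c (z^-1 * (x * y)) = c x + c y - c z.
Proof.
move=> Sx Sy Sz.
by rewrite (hc (subgroupV hS Sz) (subgroupM hS Sx Sy)) hom_onV // hc // addrC.
Qed.

Lemma hom_onMV x y z : S x -> S y -> S z -> c (z * (x * y)^-1) = - (c x + c y - c z).
Proof.
move=> Sx Sy Sz; have Sxy := subgroupM hS Sx Sy.
by rewrite (hc Sz (subgroupV hS Sxy)) hom_onV // hc // opprB.
Qed.

Lemma hom_on_zpow x j : S x -> c (zpow x j) = c x *~ j.
Proof.
move=> Sx; elim/int_rec: j => [|n IH|n IH]; first by rewrite hom_on1.
  by rewrite -addn1 PoszD zpowS hc ?IH ?mulrzDr //; exact: subgroup_zpow.
rewrite -addn1 PoszD opprD zpowSN hc ?IH ?hom_onV ?mulrzDr ?mulrNz //.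
  exact: subgroup_zpow.
exact: subgroupV.
Qed.

Lemma hom_on_commg x y : S x -> S y -> c (commg x y) = 0.
Proof.
move=> Sx Sy; have [Sx' Sy'] := (subgroupV hS Sx, subgroupV hS Sy).
rewrite /commg !hc ?hom_onV //; try by do !apply: (subgroupM hS).
by rewrite addrAC subrK addNr.
Qed.

Lemma hom_on_derived x : derived S x -> c x = 0.
Proof.
elim=> [|a b Sa Sb|a b da ca db cb|a da ca].
- exact: hom_on1.
- exact: hom_on_commg.
- by rewrite hc ?ca ?cb ?addr0 //; exact: derived_sub.
- by rewrite hom_onV ?ca ?oppr0 //; exact: derived_sub.
Qed.

End HomOn.

Section Cochains.
Variables (G : grp) (D : zmodType).
Implicit Types (S : G -> Prop) (a b : G -> D) (f g h : G -> G -> D).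

Definition cobound a (x y : G) : D := a x + a y - a (x * y).

Lemma coboundD a b x y :
  cobound (fun t => a t + b t) x y = cobound a x y + cobound b x y.
Proof. by rewrite /cobound opprD (addrACA (a x)) (addrACA (a x + a y)). Qed.

Lemma coboundN a x y : cobound (fun t => - a t) x y = - cobound a x y.
Proof. by rewrite /cobound !opprD. Qed.

Lemma hom_onD S a b : hom_on S a -> hom_on S b -> hom_on S (fun t => a t + b t).
Proof. by move=> ha hb x y Sx Sy; rewrite ha // hb // addrACA. Qed.

Lemma hom_onB S a b : hom_on S a -> hom_on S b -> hom_on S (fun t => a t - b t).
Proof. by move=> ha hb x y Sx Sy; rewrite ha // hb // opprD addrACA. Qed.

Lemma hom_on_cobound S a b : (forall x y, S x -> S y -> cobound a x y = cobound b x y) ->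
  hom_on S (fun t => a t - b t).
Proof.
move=> eab x y Sx Sy; apply/esym/subr0_eq.
by rewrite -[LHS]/(cobound (fun t => a t - b t) x y) coboundD coboundN eab // subrr.
Qed.

Lemma coboundary2_onP S f : coboundary2_on S f <->
  exists a, forall x y, S x -> S y -> f x y = cobound a x y.
Proof.
have coboundE a x y : cobound a x y = a y - a (x * y) + a x.
  by rewrite /cobound (addrC (a x)) addrAC.
by split=> -[a fa]; exists a => x y Sx Sy; rewrite fa // coboundE.
Qed.

Lemma coboundary2_onD S f g : coboundary2_on S f -> coboundary2_on S g ->
  coboundary2_on S (fun x y => f x y + g x y).
Proof.
move=> /coboundary2_onP[a fa] /coboundary2_onP[b gb]; apply/coboundary2_onP.
by exists (fun t => a t + b t) => x y Sx Sy; rewrite coboundD fa // gb.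
Qed.

Lemma cohomologous_trans f g h : cohomologous f g -> cohomologous g h -> cohomologous f h.
Proof.
move=> fg gh; have := coboundary2_onD fg gh.
by congr coboundary2_on; do 2!apply: funext => ?; rewrite addrA subrK.
Qed.

Lemma cocycle2E f : cocycle2 f <->
  forall x y z, f x (y * z) + f y z = f (x * y) z + f x y.
Proof.
have reorder (a b c e : D) : c + a - (b + e) = a - b + c - e.
  by rewrite opprD addrA (addrC c) (addrAC a).
split=> cf x y z; first by apply/eqP; rewrite -subr_eq0 reorder cf.
by rewrite -reorder cf subrr.
Qed.

Lemma cocycle2_f1 f x : cocycle2 f -> f x 1 = f 1 1.
Proof. by move=> /cocycle2E /(_ x 1 1); rewrite !mulg1 => /addrI. Qed.

Lemma cocycle2_1f f x : cocycle2 f -> f 1 x = f 1 1.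
Proof. by move=> /cocycle2E /(_ 1 1 x); rewrite !gmul1 => /addrI. Qed.

End Cochains.

(** * Extending homomorphisms into a divisible group *)

Lemma subgroup_zpow_dvd (G : grp) (U : G -> Prop) (t : G) : is_subgroup U ->
  exists k : nat, U (zpow t k) /\ forall j, U (zpow t j) -> (k %| j)%Z.
Proof.
move=> hU; have [[n [n_gt0 Utn]]|] := classic (exists n, (0 < n)%N /\ U (zpow t n)).
  have exP : exists n, (0 < n)%N && `[< U (zpow t n) >] by exists n; rewrite n_gt0 asboolT.
  case: (ex_minnP exP) => k /andP[k_gt0 /asboolP Utk] kmin.
  exists k; split=> // j Utj; apply/dvdz_mod0P.
  have k_pos : (0 < Posz k)%R by rewrite ltz_nat.
  have k_neq0 : Posz k != 0 by rewrite eqz_nat -lt0n.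
  have Utr : U (zpow t (j %% k)%Z).
    have -> : (j %% k)%Z = j - (j %/ k)%Z * k.
      by rewrite {2}(divz_eq j k) addrAC subrr add0r.
    rewrite zpowD zpowN zpowM.
    by apply: (subgroupM hU Utj); apply/(subgroupV hU)/(subgroup_zpow _ hU).
  move: (modz_ge0 j k_neq0) (ltz_pmod j k_pos) Utr.
  case: (j %% k)%Z => [[|r]|//] _ // r_lt_k Utr.
  by move: (kmin r.+1); rewrite (asboolT Utr) => /(_ isT); rewrite leqNgt -ltz_nat r_lt_k.
move=> no_pos; exists 0%N; split; first exact: subgroup1.
suff j0 j : U (zpow t j) -> j = 0 by move=> j /j0 ->.
case: j => [[|n]|n] Utj //; case: no_pos; exists n.+1; split=> //.
by move: (subgroupV hU Utj); rewrite -zpowN NegzE opprK.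
Qed.

(* Baer's argument: extend b one element at a time and conclude by Zorn's
   lemma. The commutator hypothesis makes every intermediate domain normal in
   T, with a conjugation-invariant map. *)
Section DivisibleExtension.
Variables (G : grp) (D : zmodType) (S T : G -> Prop) (b : G -> D).
Hypotheses (hD : divisible D) (hS : is_subgroup S) (hT : is_subgroup T)
  (sST : forall x, S x -> T x) (hb : hom_on S b)
  (commT : forall x y, T x -> T y -> S (commg x y) /\ b (commg x y) = 0).

Record partial_ext := PartialExt {
  pdom : G -> Prop;
  pmap : G -> D;
  pdom_subgroup : is_subgroup pdom;
  pdom_sup : forall x, S x -> pdom x;
  pdom_sub : forall x, pdom x -> T x;
  pmap_hom : hom_on pdom pmap;
  pmap_ext : forall x, S x -> pmap x = b x }.

Definition ext_le (p q : partial_ext) :=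
  (forall x, pdom p x -> pdom q x) /\ (forall x, pdom p x -> pmap q x = pmap p x).

Section OneStep.
Variables (p : partial_ext) (t : G).
Hypothesis Tt : T t.
Local Notation U := (pdom p).
Local Notation c := (pmap p).
Let hU := @pdom_subgroup p.
Let hc := @pmap_hom p.

Lemma pdom_conj g u : T g -> U u -> U (g^-1 * u * g) /\ c (g^-1 * u * g) = c u.
Proof.
move=> Tg Uu; have [Scomm bcomm] := commT (pdom_sub Uu) Tg.
have -> : g^-1 * u * g = u * commg u g by rewrite /commg !gmulA mulgV gmul1.
have Ucomm := pdom_sup p Scomm.
split; first exact: (subgroupM hU Uu Ucomm).
by rewrite (hc Uu Ucomm) (pmap_ext p Scomm) bcomm addr0.
Qed.

Lemma pmap_zpow_linear : exists e : D, forall j, U (zpow t j) -> c (zpow t j) = e *~ j.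
Proof.
have [[|k] [Utk kdvd]] := subgroup_zpow_dvd t hU.
  by exists 0 => j /kdvd; rewrite dvd0z => /eqP ->; rewrite (hom_on1 hU hc).
have [e ek] := hD (c (zpow t k.+1)) (ltn0Sn k).
exists e => j /kdvd/divzK <-.
by rewrite zpowM (hom_on_zpow hU hc) // -ek -mulrzA_C -pmulrn.
Qed.

Definition adjoin_dom x := exists u j, U u /\ x = u * zpow t j.

Lemma adjoin_dom_mul u m v n : U u -> U v -> exists2 w, U w /\ c w = c v &
  u * zpow t m * (v * zpow t n) = u * w * zpow t (m + n).
Proof.
move=> Uu Uv; have [Uw cw] := pdom_conj (subgroupV hT (subgroup_zpow m hT Tt)) Uv.
exists ((zpow t m)^-1^-1 * v * (zpow t m)^-1) => //.
by rewrite invgK zpowD !gmulA mulgVK.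
Qed.

Lemma adjoin_dom_subgroup : is_subgroup adjoin_dom.
Proof.
split; first by exists 1, 0; rewrite mulg1; split; first exact: subgroup1.
split=> [x y [u [m [Uu ->]]] [v [n [Uv ->]]]|x [u [m [Uu ->]]]].
  have [w [Uw _] ->] := adjoin_dom_mul m n Uu Uv.
  by exists (u * w), (m + n); split; first exact: subgroupM.
have [Uw _] := pdom_conj (subgroup_zpow m hT Tt) (subgroupV hU Uu).
exists ((zpow t m)^-1 * u^-1 * zpow t m), (- m); split => //.
by rewrite zpowN invMg mulgK.
Qed.

Section Adjoin.
Variable e : D.
Hypothesis ce : forall j, U (zpow t j) -> c (zpow t j) = e *~ j.

Definition adjoin_map x : D :=
  let pr := epsilon (inhabits (1, 0%R))
    (fun pr : G * int => U pr.1 /\ x = pr.1 * zpow t pr.2) in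
  c pr.1 + e *~ pr.2.

Lemma adjoin_mapE u j : U u -> adjoin_map (u * zpow t j) = c u + e *~ j.
Proof.
move=> Uu; rewrite /adjoin_map.
have ex : exists pr : G * int, U pr.1 /\ u * zpow t j = pr.1 * zpow t pr.2.
  by exists (u, j).
case: (epsilon_spec (inhabits (1, 0%R)) _ ex).
move: (epsilon _ _) => [u' k] /= Uu' e_uj.
have e_t : u'^-1 * u = zpow t (k - j).
  by apply: (@mulgI _ u'); rewrite mulKVg zpowD zpowN gmulA -e_uj mulgK.
have Uu'V := subgroupV hU Uu'.
have := ce (j := k - j); rewrite -e_t => /(_ (subgroupM hU Uu'V Uu)).
rewrite (hc Uu'V Uu) (hom_onV hU hc Uu') => e_diff.
by rewrite -(addNKr (c u') (c u)) e_diff mulrzBr -addrA subrK.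
Qed.

Lemma adjoin_map_pdom x : U x -> adjoin_map x = c x.
Proof. by move=> Ux; rewrite -{1}[x]mulg1 -(zpow0 t) adjoin_mapE // mulr0z addr0. Qed.

Lemma adjoin_map_hom : hom_on adjoin_dom adjoin_map.
Proof.
move=> x y [u [m [Uu ->]]] [v [n [Uv ->]]].
have [w [Uw cw] ->] := adjoin_dom_mul m n Uu Uv.
rewrite !adjoin_mapE //; last exact: (subgroupM hU Uu Uw).
by rewrite (hc Uu Uw) cw mulrzDr [RHS]addrACA.
Qed.

Definition adjoin : partial_ext.
Proof.
apply: (@PartialExt adjoin_dom adjoin_map adjoin_dom_subgroup).
- by move=> x Sx; exists x, 0; rewrite mulg1; split; first exact: pdom_sup.
- move=> x [u [j [Uu ->]]]; apply: (subgroupM hT (pdom_sub Uu)).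
  exact: subgroup_zpow.
- exact: adjoin_map_hom.
- by move=> x Sx; rewrite adjoin_map_pdom ?pmap_ext //; exact: pdom_sup.
Defined.

Lemma adjoinP : ext_le p adjoin /\ pdom adjoin t.
Proof.
split; last by exists 1, 1%R; rewrite zpow1 gmul1; split; first exact: subgroup1.
split=> x Ux; first by exists x, 0; rewrite mulg1.
exact: adjoin_map_pdom.
Qed.

End Adjoin.

Lemma partial_ext_adjoin : exists q, ext_le p q /\ pdom q t.
Proof. by have [e ce] := pmap_zpow_linear; exists (adjoin ce); exact: adjoinP. Qed.

End OneStep.

Definition ext_base : partial_ext :=
  @PartialExt S b hS (fun x Sx => Sx) sST hb (fun x _ => erefl).

Lemma ext_base_le p : ext_le ext_base p.
Proof. by split=> x Sx /=; [exact: pdom_sup | exact: pmap_ext]. Qed.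

Lemma ext_le_trans p q r : ext_le p q -> ext_le q r -> ext_le p r.
Proof.
move=> [pq_dom pq_map] [qr_dom qr_map]; split=> x px; first exact/qr_dom/pq_dom.
by rewrite qr_map ?pq_map //; exact: pq_dom.
Qed.

Section ChainBound.
Variable A : partial_ext -> Prop.
Hypothesis totA : forall p q, A p -> A q -> ext_le p q \/ ext_le q p.

(* Adding the base makes the empty chain bounded too. *)
Let A0 p := p = ext_base \/ A p.

Let totA0 p q : A0 p -> A0 q -> ext_le p q \/ ext_le q p.
Proof.
case=> [->|Ap]; first by left; exact: ext_base_le.
by case=> [->|Aq]; [right; exact: ext_base_le | exact: totA].
Qed.

Definition chain_dom x := exists2 p, A0 p & pdom p x.

Definition chain_map x : D :=
  pmap (epsilon (inhabits ext_base) (fun p => A0 p /\ pdom p x)) x.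

Lemma chain_mapE p x : A0 p -> pdom p x -> chain_map x = pmap p x.
Proof.
move=> A0p px; rewrite /chain_map.
have ex : exists p, A0 p /\ pdom p x by exists p.
case: (epsilon_spec (inhabits ext_base) _ ex); move: (epsilon _ _) => q A0q qx.
by case: (totA0 A0p A0q) => -[_ ->].
Qed.

Lemma chain_dom2 x y : chain_dom x -> chain_dom y ->
  exists2 p, A0 p & pdom p x /\ pdom p y.
Proof.
move=> [p A0p px] [q A0q qy].
case: (totA0 A0p A0q) => -[le_dom _]; [exists q | exists p] => //.
  by split=> //; exact: le_dom.
by split=> //; exact: le_dom.
Qed.

Lemma chain_dom_subgroup : is_subgroup chain_dom.
Proof.
split; first by exists ext_base; [left | exact: subgroup1].
split=> [x y dx dy|x [p A0p px]].
  have [p A0p [px py]] := chain_dom2 dx dy.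
  by exists p => //; exact: (subgroupM (pdom_subgroup p) px py).
by exists p => //; exact: (subgroupV (pdom_subgroup p) px).
Qed.

Lemma chain_map_hom : hom_on chain_dom chain_map.
Proof.
move=> x y dx dy; have [p A0p [px py]] := chain_dom2 dx dy.
have pxy := subgroupM (pdom_subgroup p) px py.
by rewrite !(chain_mapE A0p) //; exact: pmap_hom.
Qed.

Definition chain_sup : partial_ext.
Proof.
apply: (@PartialExt chain_dom chain_map chain_dom_subgroup).
- by move=> x Sx; exists ext_base; first left.
- by move=> x [p _ px]; exact: (pdom_sub px).
- exact: chain_map_hom.
- by move=> x Sx; rewrite (@chain_mapE ext_base) //; left.
Defined.

Lemma chain_supP p : A p -> ext_le p chain_sup.
Proof.
move=> Ap; split=> x px; first by exists p; first right.
by rewrite /= (chain_mapE (or_intror Ap)).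
Qed.

End ChainBound.

Lemma hom_on_extend : exists b', hom_on T b' /\ forall x, S x -> b' x = b x.
Proof.
pose R p q := `[< ext_le p q >].
have [m m_max] : exists m, classical_sets.premaximal R m.
  apply: (classical_sets.ZL_preorder ext_base).
  - by move=> p; apply/asboolP; split.
  - by move=> p q r /asboolP pq /asboolP qr; apply/asboolP; exact: (ext_le_trans pq qr).
  move=> A totA; have totA' p q : A p -> A q -> ext_le p q \/ ext_le q p.
    by move=> Ap Aq; case: (totA p q Ap Aq) => /asboolP; [left | right].
  by exists (chain_sup totA') => p Ap; exact/asboolP/chain_supP.
have Tm x : T x -> pdom m x.
  move=> Tx; have [q [mq qx]] := partial_ext_adjoin m Tx.
  by have /asboolP[qm _] := m_max q (asboolT mq); exact: qm.
exists (pmap m); split; last exact: pmap_ext.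
by move=> x y Tx Ty; exact: (pmap_hom (Tm x Tx) (Tm y Ty)).
Qed.

End DivisibleExtension.

Section CommutingProduct.
Variables (G : grp) (D : zmodType) (P Q : G -> Prop) (w : G -> D).
Hypotheses (hP : is_subgroup P) (hQ : is_subgroup Q)
  (PQ_comm : forall p q, P p -> Q q -> p * q = q * p)
  (hw : hom_on Q w) (w_PQ : forall x, P x -> Q x -> w x = 0).

Definition mulset x := exists p q, P p /\ Q q /\ x = p * q.

Lemma mulset_subgroup : is_subgroup mulset.
Proof.
split; first by exists 1, 1; rewrite gmul1; do ![split] => //; exact: subgroup1.
split=> [x1 x2 [p1 [q1 [P1 [Q1 ->]]]] [p2 [q2 [P2 [Q2 ->]]]]|x [p [q [Pp [Qq ->]]]]].
  exists (p1 * p2), (q1 * q2); split; first exact: (subgroupM hP P1 P2).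
  split; first exact: (subgroupM hQ Q1 Q2).
  by apply: mulgACA; rewrite (PQ_comm P2 Q1).
have [Pp' Qq'] := (subgroupV hP Pp, subgroupV hQ Qq).
exists p^-1, q^-1; split=> //; split=> //.
by rewrite invMg (PQ_comm Pp' Qq').
Qed.

Definition mulset_map x : D :=
  w (epsilon (inhabits (1, 1))
       (fun pq : G * G => P pq.1 /\ Q pq.2 /\ x = pq.1 * pq.2)).2.

Lemma mulset_mapE p q : P p -> Q q -> mulset_map (p * q) = w q.
Proof.
move=> Pp Qq; rewrite /mulset_map.
have ex : exists pq : G * G, P pq.1 /\ Q pq.2 /\ p * q = pq.1 * pq.2 by exists (p, q).
case: (epsilon_spec (inhabits (1, 1)) _ ex); move: (epsilon _ _) => [p' q'] /= Pp' [Qq' e_pq].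
have e_PQ : p'^-1 * p = q' * q^-1.
  by apply: (@mulgI _ p'); rewrite mulKVg gmulA -e_pq mulgK.
have PQ_x : P (p'^-1 * p) by exact: (subgroupM hP (subgroupV hP Pp') Pp).
have := w_PQ PQ_x; rewrite e_PQ (hw Qq' (subgroupV hQ Qq)) (hom_onV hQ hw Qq).
by move=> /(_ (subgroupM hQ Qq' (subgroupV hQ Qq))); exact: subr0_eq.
Qed.

Lemma mulset_map_hom : hom_on mulset mulset_map.
Proof.
move=> x1 x2 [p1 [q1 [P1 [Q1 ->]]]] [p2 [q2 [P2 [Q2 ->]]]].
rewrite mulgACA; last by rewrite (PQ_comm P2 Q1).
rewrite !mulset_mapE //; last exact: (subgroupM hQ Q1 Q2); last exact: (subgroupM hP P1 P2).
exact: hw.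
Qed.

End CommutingProduct.

(** * Central products *)

Section CentralProduct.
Variables (G : grp) (H K : G -> Prop).
Hypothesis hc : central_product H K.
Implicit Types (x y z g : G).

Let hH : is_subgroup H. Proof. by case: hc => [[]]. Qed.
Let hK : is_subgroup K. Proof. by case: hc => _ [[]]. Qed.
Let HK_cover g : exists h k, H h /\ K k /\ g = h * k.
Proof. by case: hc => _ [_ [cover _]]; exact: cover. Qed.
Let commHK h k : H h -> K k -> h * k = k * h.
Proof. by case: hc => _ [_ [_ comm]]; exact: comm. Qed.

Definition HK_meet x := H x /\ K x.

Lemma HK_meet_subgroup : is_subgroup HK_meet. Proof. exact: subgroupI. Qed.

Lemma HK_meet_central a g : HK_meet a -> a * g = g * a.
Proof.
move=> [Ha Ka]; have [h [k [Hh [Kk ->]]]] := HK_cover g.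
by rewrite gmulA -(commHK Hh Ka) -gmulA (commHK Ha Kk) gmulA.
Qed.

Definition hpart g := epsilon (inhabits 1) (fun h => H h /\ K (h^-1 * g)).
Definition kpart g := (hpart g)^-1 * g.

Lemma hpart_kpartP g : H (hpart g) /\ K (kpart g).
Proof.
apply: (epsilon_spec (inhabits 1) (fun h => H h /\ K (h^-1 * g))).
by have [h [k [Hh [Kk ->]]]] := HK_cover g; exists h; rewrite mulKg.
Qed.

Lemma hpartP g : H (hpart g). Proof. by case: (hpart_kpartP g). Qed.
Lemma kpartP g : K (kpart g). Proof. by case: (hpart_kpartP g). Qed.
Lemma hpart_kpart g : hpart g * kpart g = g. Proof. exact: mulKVg. Qed.

Lemma kpart_meet h : H h -> HK_meet (kpart h).
Proof.
by move=> Hh; split; [exact: (subgroupM hH (subgroupV hH (hpartP h)) Hh) | exact: kpartP].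
Qed.

Lemma hpart_meet k : K k -> HK_meet (hpart k).
Proof.
move=> Kk; split; first exact: hpartP.
rewrite -[hpart k](mulgK _ (kpart k)) hpart_kpart.
exact: (subgroupM hK Kk (subgroupV hK (kpartP k))).
Qed.

Definition defect x y := (hpart (x * y))^-1 * (hpart x * hpart y).

Lemma defectE x y : defect x y = kpart (x * y) * (kpart x * kpart y)^-1.
Proof.
have e : hpart (x * y) * kpart (x * y) = hpart x * hpart y * (kpart x * kpart y).
  by rewrite hpart_kpart mulgACA ?hpart_kpart // (commHK (hpartP y) (kpartP x)).
have e' : hpart x * hpart y = hpart (x * y) * kpart (x * y) * (kpart x * kpart y)^-1.
  by rewrite e mulgK.
by rewrite /defect e' -gmulA mulKg.
Qed.

Lemma defect_meet x y : HK_meet (defect x y).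
Proof.
split; first by apply: (subgroupM hH (subgroupV hH _) (subgroupM hH _ _)); exact: hpartP.
rewrite defectE.
by apply: (subgroupM hK (kpartP _) (subgroupV hK (subgroupM hK _ _))); exact: kpartP.
Qed.

Lemma defect_cocycle x y z : defect x (y * z) * defect y z = defect (x * y) z * defect x y.
Proof.
have dC := HK_meet_central (hpart z) (defect_meet x y).
have dE : hpart (x * y) * defect x y = hpart x * hpart y by exact: mulKVg.
move: (defect x y) dC dE => d dC dE; rewrite /defect (gmulA x y z) !gmulA mulgK.
by rewrite -(gmulA _ (hpart z) d) -dC gmulA -(gmulA _ _ d) dE gmulA.
Qed.

Lemma defectC h k : H h -> K k -> defect h k = defect k h.
Proof.
move=> Hh Kk; rewrite /defect (commHK Hh Kk).
by rewrite (HK_meet_central _ (hpart_meet Kk)).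
Qed.

Variable D : zmodType.
Implicit Types (d phi psi w : G -> D).

Definition chi_meet d x y : D := d (defect x y).

Lemma hom_on_defect_hpart S phi x y : is_subgroup S -> hom_on S phi ->
  S (hpart x) -> S (hpart y) -> S (hpart (x * y)) ->
  phi (defect x y) = cobound (fun g => phi (hpart g)) x y.
Proof. by move=> hS hphi Sx Sy Sxy; exact: (hom_onVM hS hphi Sx Sy Sxy). Qed.

Lemma hom_on_defect_kpart S psi x y : is_subgroup S -> hom_on S psi ->
  S (kpart x) -> S (kpart y) -> S (kpart (x * y)) ->
  psi (defect x y) = - cobound (fun g => psi (kpart g)) x y.
Proof.
by move=> hS hpsi Sx Sy Sxy; rewrite defectE (hom_onMV hS hpsi Sx Sy Sxy).
Qed.

Lemma chi_meet_H d x y : hom_on HK_meet d -> H x -> H y ->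
  chi_meet d x y = - cobound (fun g => d (kpart g)) x y.
Proof.
move=> hd Hx Hy; have Hxy := subgroupM hH Hx Hy.
exact: (hom_on_defect_kpart HK_meet_subgroup hd
  (kpart_meet Hx) (kpart_meet Hy) (kpart_meet Hxy)).
Qed.

Lemma chi_meet_K d x y : hom_on HK_meet d -> K x -> K y ->
  chi_meet d x y = cobound (fun g => d (hpart g)) x y.
Proof.
move=> hd Kx Ky; have Kxy := subgroupM hK Kx Ky.
exact: (hom_on_defect_hpart HK_meet_subgroup hd
  (hpart_meet Kx) (hpart_meet Ky) (hpart_meet Kxy)).
Qed.

Lemma chi_meet_cocycle d : hom_on HK_meet d -> cocycle2 (chi_meet d).
Proof.
move=> hd; apply/cocycle2E => x y z.
by rewrite /chi_meet -!hd ?defect_cocycle //; exact: defect_meet.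
Qed.

Lemma chi_meet_in_ker d : hom_on HK_meet d -> in_ker_theta' H K (chi_meet d).
Proof.
move=> hd; split; [|split].
- apply/coboundary2_onP; exists (fun g => - d (kpart g)) => x y Hx Hy.
  by rewrite coboundN chi_meet_H.
- apply/coboundary2_onP; exists (fun g => d (hpart g)) => x y Kx Ky.
  by rewrite chi_meet_K.
- by move=> h k Hh Kk; rewrite /nu /chi_meet defectC // subrr.
Qed.

Lemma chi_meet_coboundary d phi psi : hom_on H phi -> hom_on K psi ->
  (forall a, HK_meet a -> d a = phi a + psi a) -> coboundary2 (chi_meet d).
Proof.
move=> hphi hpsi d_sum; apply/coboundary2_onP.
exists (fun g => phi (hpart g) + - psi (kpart g)) => x y _ _.
rewrite coboundD coboundN /chi_meet d_sum; last exact: defect_meet.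
rewrite (hom_on_defect_hpart hH hphi (hpartP x) (hpartP y) (hpartP _)).
by rewrite (hom_on_defect_kpart hK hpsi (kpartP x) (kpartP y) (kpartP _)).
Qed.

Definition Zset x := derived H x /\ derived K x.

Lemma Zset_meet x : Zset x -> HK_meet x.
Proof. by case=> dH dK; split; [exact: derived_sub dH | exact: derived_sub dK]. Qed.

Lemma chi_meet_inj d : hom_on HK_meet d -> coboundary2 (chi_meet d) ->
  forall z, Zset z -> d z = 0.
Proof.
move=> hd /coboundary2_onP[c hcob] z [dHz dKz].
have hHc : hom_on H (fun g => c g - - d (kpart g)).
  by apply: hom_on_cobound => x y Hx Hy; rewrite coboundN -hcob // chi_meet_H.
have hKc : hom_on K (fun g => c g - d (hpart g)).
  by apply: hom_on_cobound => x y Kx Ky; rewrite -hcob // chi_meet_K.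
have /= /subr0_eq c_kpart := hom_on_derived hH hHc dHz.
have /= /subr0_eq c_hpart := hom_on_derived hK hKc dKz.
have [Hz Kz] := Zset_meet (conj dHz dKz).
rewrite -(hpart_kpart z) hd; [|exact: hpart_meet | exact: kpart_meet].
by rewrite -c_hpart -[d (kpart z)]opprK -c_kpart subrr.
Qed.

Hypothesis hD : divisible D.

Lemma hom_on_extend_meet S (a : G -> D) : is_subgroup S -> (forall x, S x -> HK_meet x) ->
  hom_on S a -> exists b, hom_on HK_meet b /\ forall x, S x -> b x = a x.
Proof.
move=> hS SA ha; apply: (hom_on_extend hD hS HK_meet_subgroup SA ha) => x y Ax Ay.
have -> : commg x y = 1.
  by rewrite /commg -(gmulA _ y^-1) -(HK_meet_central y^-1 Ax) mulKg gmulV.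
by split; [exact: subgroup1 | exact: hom_on1 hS ha].
Qed.

Lemma hom_on_extend_from_meet (L : G -> Prop) w :
  is_subgroup L -> (forall x, HK_meet x -> L x) -> hom_on HK_meet w ->
  (forall x, derived L x -> HK_meet x -> w x = 0) ->
  exists phi, hom_on L phi /\ forall a, HK_meet a -> phi a = w a.
Proof.
move=> hL AL hw w_derived.
have hL' := derived_subgroup L; have hA := HK_meet_subgroup.
have comm p q : derived L p -> HK_meet q -> p * q = q * p.
  by move=> _ Aq; rewrite (HK_meet_central p Aq).
have hM := mulset_subgroup hL' hA comm.
have hu := mulset_map_hom hL' hA comm hw w_derived.
have uE := mulset_mapE hL' hA hw w_derived.
have ML x : mulset (derived L) HK_meet x -> L x.
  by move=> [p [a [dp [Aa ->]]]]; exact: (subgroupM hL (derived_sub hL dp) (AL a Aa)).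
have commL x y : L x -> L y ->
    mulset (derived L) HK_meet (commg x y) /\ mulset_map (derived L) HK_meet w (commg x y) = 0.
  move=> Lx Ly; rewrite -[commg x y]mulg1.
  have dxy := derived_comm Lx Ly; have A1 := subgroup1 hA.
  split; first by exists (commg x y), 1.
  by rewrite uE // (hom_on1 hA hw).
have [phi [hphi ephi]] := hom_on_extend hD hM hL ML hu commL.
exists phi; split=> // a Aa.
have d1 := derived_one L; rewrite -{1}[a]gmul1 ephi ?uE //.
by exists 1, a.
Qed.

(* With X1 := H' :&: K and X2 := K' :&: H, the map x1 x2 |-> e x2 is well
   defined on X1 X2 because e kills X1 :&: X2 <= Z; extend it to u on A. Then u
   kills H' :&: A and e - u kills K' :&: A, so both extend, to H and to K. *)
Lemma hom_on_meet_split e : hom_on HK_meet e -> (forall z, Zset z -> e z = 0) ->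
  exists phi psi, [/\ hom_on H phi, hom_on K psi &
    forall a, HK_meet a -> e a = phi a + psi a].
Proof.
move=> he e_Z.
pose X1 x := derived H x /\ K x; pose X2 x := derived K x /\ H x.
have hX1 : is_subgroup X1 := subgroupI (derived_subgroup H) hK.
have hX2 : is_subgroup X2 := subgroupI (derived_subgroup K) hH.
have X1A x : X1 x -> HK_meet x by case=> dx Kx; split=> //; exact: (derived_sub hH dx).
have X2A x : X2 x -> HK_meet x by case=> dx Hx; split=> //; exact: (derived_sub hK dx).
have he2 : hom_on X2 e by move=> x y X2x X2y; exact: (he _ _ (X2A x X2x) (X2A y X2y)).
have e_X12 x : X1 x -> X2 x -> e x = 0 by move=> [dHx _] [dKx _]; exact: e_Z.
have comm p q : X1 p -> X2 q -> p * q = q * p.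
  by move=> _ /X2A Aq; rewrite (HK_meet_central p Aq).
have MA x : mulset X1 X2 x -> HK_meet x.
  move=> [p [q [X1p [X2q ->]]]].
  exact: (subgroupM HK_meet_subgroup (X1A p X1p) (X2A q X2q)).
have uE := mulset_mapE hX1 hX2 he2 e_X12.
have [u [hu eu]] := hom_on_extend_meet (mulset_subgroup hX1 hX2 comm) MA
  (mulset_map_hom hX1 hX2 comm he2 e_X12).
have [X1_1 X2_1] := (subgroup1 hX1, subgroup1 hX2).
have u_H x : derived H x -> HK_meet x -> u x = 0.
  move=> dx [_ Kx]; have X1x : X1 x by [].
  by rewrite -[x]mulg1 eu ?uE ?(hom_on1 hX2 he2) //; exists x, 1.
have v_K x : derived K x -> HK_meet x -> e x - u x = 0.
  move=> dx [Hx _]; have X2x : X2 x by [].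
  by rewrite -{2}[x]gmul1 eu ?uE ?subrr //; exists 1, x.
have [AH AK] : (forall x, HK_meet x -> H x) /\ (forall x, HK_meet x -> K x) by split=> x [].
have [phi [hphi ephi]] := hom_on_extend_from_meet hH AH hu u_H.
have [psi [hpsi epsi]] := hom_on_extend_from_meet hK AK (hom_onB he hu) v_K.
by exists phi, psi; split=> // a Aa; rewrite ephi // epsi // addrC subrK.
Qed.

Lemma chi_meet_wd d1 d2 : hom_on HK_meet d1 -> hom_on HK_meet d2 ->
  (forall z, Zset z -> d1 z = d2 z) -> cohomologous (chi_meet d1) (chi_meet d2).
Proof.
move=> h1 h2 e12; have d12_Z z : Zset z -> d1 z - d2 z = 0 by move=> Zz; rewrite e12 ?subrr.
have [phi [psi [hphi hpsi e_sum]]] := hom_on_meet_split (hom_onB h1 h2) d12_Z.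
exact: (chi_meet_coboundary hphi hpsi e_sum).
Qed.

Section KernelToImage.
Variables (f : G -> G -> D) (cH cK : G -> D).
Hypotheses (f_cocycle : cocycle2 f)
  (fH : forall x y, H x -> H y -> f x y = cobound cH x y)
  (fK : forall x y, K x -> K y -> f x y = cobound cK x y)
  (f_nu : forall h k, H h -> K k -> f h k = f k h).

(* The central extension of G by D with factor set f; its identity is
   (1, - f 1 1). *)
Definition emul (X Y : G * D) : G * D := (X.1 * Y.1, X.2 + Y.2 + f X.1 Y.1).

Lemma emulA X Y Z : emul X (emul Y Z) = emul (emul X Y) Z.
Proof.
case: X Y Z => [x a] [y b] [z c]; rewrite /emul /=; congr pair; first exact: gmulA.
have e : f y z + f x (y * z) = f x y + f (x * y) z.
  by rewrite addrC ((cocycle2E f).1 f_cocycle) addrC.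
by rewrite -!addrA [in RHS](addrCA (f x y)) e.
Qed.

Lemma emul2 X Y : (emul X Y).2 = X.2 + Y.2 + f X.1 Y.1. Proof. by []. Qed.

Lemma emulACA A B C E : emul B C = emul C B ->
  emul (emul A B) (emul C E) = emul (emul A C) (emul B E).
Proof. by move=> BC; rewrite -!emulA (emulA B) BC -emulA. Qed.

Lemma emul_central X b : emul X (1, b) = emul (1, b) X.
Proof.
case: X => x a; rewrite /emul /= mulg1 gmul1.
by rewrite (cocycle2_f1 x f_cocycle) (cocycle2_1f x f_cocycle) (addrC a).
Qed.

Definition lift c g : G * D := (g, - c g).

Lemma lift_mul S c x y : (forall x y, S x -> S y -> f x y = cobound c x y) ->
  S x -> S y -> emul (lift c x) (lift c y) = lift c (x * y).
Proof. by move=> fS Sx Sy; rewrite /emul /= fS // -opprD addKr. Qed.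

Lemma liftC h k : H h -> K k -> emul (lift cK k) (lift cH h) = emul (lift cH h) (lift cK k).
Proof. by move=> Hh Kk; rewrite /emul /= (commHK Hh Kk) (addrC (- cK k)) (f_nu Hh Kk). Qed.

Definition sec g := emul (lift cH (hpart g)) (lift cK (kpart g)).
Definition sec_defect z := (emul (lift cH z) (lift cK z^-1)).2.

Lemma secE g : (sec g).1 = g. Proof. exact: hpart_kpart. Qed.

Lemma sec_defectE z : emul (lift cH z) (lift cK z^-1) = (1, sec_defect z).
Proof. by rewrite /sec_defect /emul /= mulgV. Qed.

Lemma sec_mul x y :
  emul (sec x) (sec y) = emul (sec (x * y)) (1, sec_defect (defect x y)).
Proof.
have [wH wK] := defect_meet x y; set w := defect x y in wH wK *.
have eH : hpart x * hpart y = hpart (x * y) * w by rewrite mulKVg.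
have eK : kpart x * kpart y = w^-1 * kpart (x * y).
  by rewrite /w defectE invMg invgK mulgVK.
rewrite /sec emulACA; last exact: liftC (hpartP y) (kpartP x).
rewrite (lift_mul fH (hpartP x) (hpartP y)) (lift_mul fK (kpartP x) (kpartP y)) eH eK.
rewrite -(lift_mul fH (hpartP _) wH) -(lift_mul fK (subgroupV hK wK) (kpartP _)).
by rewrite emulA -(emulA _ (lift cH w)) sec_defectE -emulA -emul_central emulA.
Qed.

(* The shift compensates for the identity of the extension not being (1, 0). *)
Definition sec_map z := sec_defect z + f 1 1.

Lemma sec_map_hom : hom_on HK_meet sec_map.
Proof.
move=> z1 z2 [H1 K1] [H2 K2]; have [K1' K2'] := (subgroupV hK K1, subgroupV hK K2).
have e : emul (emul (lift cH z1) (lift cK z1^-1)) (emul (lift cH z2) (lift cK z2^-1)) =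
         emul (lift cH (z1 * z2)) (lift cK (z1 * z2)^-1).
  rewrite emulACA; last exact: liftC H2 K1'.
  rewrite (lift_mul fH H1 H2) (lift_mul fK K1' K2') invMg.
  by rewrite (HK_meet_central z2^-1 (subgroupV HK_meet_subgroup (conj H1 K1))).
move: e; rewrite !sec_defectE /emul /= => -[_ e].
by rewrite /sec_map -e [RHS]addrACA [RHS]addrA.
Qed.

Lemma sec_cohomologous : cohomologous f (chi_meet sec_map).
Proof.
have rearrange (a b c F X : D) : a + b + F = c + X -> F - X = - a + - b - - c.
  move=> e; have -> : F = c + X - (a + b) by rewrite -e addrC addKr.
  by rewrite opprK -opprD addrAC addrK addrC.
apply/coboundary2_onP; exists (fun g => - (sec g).2) => x y _ _.
rewrite /cobound /chi_meet /sec_map; apply: rearrange.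
have := congr1 snd (sec_mul x y).
rewrite (emul2 (sec x)) (emul2 (sec (x * y))) !secE (cocycle2_f1 _ f_cocycle).
by move=> ->; rewrite [RHS]addrA.
Qed.
End KernelToImage.

Lemma chi_meet_onto f : cocycle2 f -> in_ker_theta' H K f ->
  exists d, hom_on HK_meet d /\ cohomologous f (chi_meet d).
Proof.
move=> f_cocycle [/coboundary2_onP[cH fH] [/coboundary2_onP[cK fK] f_nu]].
have f_comm h k : H h -> K k -> f h k = f k h by move=> Hh Kk; apply/subr0_eq/f_nu.
exists (sec_map f cH cK); split; first exact: sec_map_hom.
exact: sec_cohomologous.
Qed.

(* Some extension of a to A; by [chi_meet_wd] the class of [chi a] does not
   depend on the choice. *)
Definition zext (a : G -> D) : G -> D :=
  epsilon (inhabits a) (fun b => hom_on HK_meet b /\ forall z, Zset z -> b z = a z).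

Lemma zextP a : hom_on Zset a ->
  hom_on HK_meet (zext a) /\ forall z, Zset z -> zext a z = a z.
Proof.
move=> ha; apply: (epsilon_spec (inhabits a)
  (fun b => hom_on HK_meet b /\ forall z, Zset z -> b z = a z)).
have hZ : is_subgroup Zset := subgroupI (derived_subgroup H) (derived_subgroup K).
exact: (hom_on_extend_meet hZ Zset_meet ha).
Qed.

Definition chi a := chi_meet (zext a).

Lemma chi_cocycle a : hom_on Zset a -> cocycle2 (chi a).
Proof. by move=> /zextP[hd _]; exact: chi_meet_cocycle. Qed.

Lemma chi_wd a b : hom_on Zset a -> hom_on Zset b ->
  (forall z, Zset z -> a z = b z) -> cohomologous (chi a) (chi b).
Proof.
move=> /zextP[ha ea] /zextP[hb eb] eab; apply: chi_meet_wd => // z Zz.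
by rewrite ea // eb // eab.
Qed.

Lemma chi_additive a b : hom_on Zset a -> hom_on Zset b ->
  cohomologous (chi (fun t => a t + b t)) (fun x y => chi a x y + chi b x y).
Proof.
move=> ha hb; have [ha' ea] := zextP ha; have [hb' eb] := zextP hb.
have [hab' eab] := zextP (hom_onD ha hb).
by apply: (chi_meet_wd hab' (hom_onD ha' hb')) => z Zz; rewrite eab // ea // eb.
Qed.

Lemma chi_inj a : hom_on Zset a -> coboundary2 (chi a) -> forall z, Zset z -> a z = 0.
Proof. by move=> /zextP[hd ed] cob z Zz; rewrite -ed //; exact: (chi_meet_inj hd cob). Qed.

Lemma chi_in_ker a : hom_on Zset a -> in_ker_theta' H K (chi a).
Proof. by move=> /zextP[hd _]; exact: chi_meet_in_ker. Qed.

Lemma chi_onto f : cocycle2 f -> in_ker_theta' H K f ->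
  exists a, hom_on Zset a /\ cohomologous f (chi a).
Proof.
move=> hf fker; have [d [hd fd]] := chi_meet_onto hf fker.
have hdZ : hom_on Zset d by move=> x y Zx Zy; exact: (hd _ _ (Zset_meet Zx) (Zset_meet Zy)).
exists d; split=> //; apply: (cohomologous_trans fd).
by have [hd' ed] := zextP hdZ; apply: chi_meet_wd => // z Zz; rewrite ed.
Qed.
End CentralProduct.

Theorem theorem3p3 (G : grp) (H K : G -> Prop) (D : zmodType)
  (hc : central_product H K) (hD : divisible D) :
  let Z := fun x : G => derived H x /\ derived K x in
  exists chi : (G -> D) -> (G -> G -> D),
    (forall a, hom_on Z a -> cocycle2 (chi a)) /\
    (forall a b, hom_on Z a -> hom_on Z b -> (forall z, Z z -> a z = b z) ->
       cohomologous (chi a) (chi b)) /\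
    (forall a b, hom_on Z a -> hom_on Z b ->
       cohomologous (chi (fun x => a x + b x))
                    (fun x y => chi a x y + chi b x y)) /\
    (forall a, hom_on Z a -> coboundary2 (chi a) -> forall z, Z z -> a z = 0) /\
    (forall a, hom_on Z a -> in_ker_theta' H K (chi a)) /\
    (forall f, cocycle2 f -> in_ker_theta' H K f ->
       exists a, hom_on Z a /\ cohomologous f (chi a)).
Proof.
move=> Z; exists (@chi G H K D); split; first exact: (chi_cocycle hc hD).
split; first exact: (chi_wd hc hD).
split; first exact: (chi_additive hc hD).
split; first exact: (chi_inj hc hD).
split; first exact: (chi_in_ker hc hD).
exact: (chi_onto hc hD).
Qed.
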